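(* Consider a single agent with finite action set $A$, $|A|=m\ge 2$, and unknown utility $U:A\to[0,1]$, interacting with a principal over rounds; in each round $t$ the principal chooses a payment $P^t:A\to\mathbb{R}_+$, and the agent plays an action maximizing $U(a)+P^t(a)$, which the principal observes. Consider the principal's algorithm that, for each action $a\in A$, uses $\mathcal{O}(\log(1/\varepsilon))$ iterations of binary search to approximate to precision $\varepsilon$ the smallest value $P^*(a)\in[0,1]$ such that the agent plays $a$ when paid $P^*(a)$ for action $a$ and $0$ for all other actions (one round per binary-search query), and then outputs $\tilde U:=-P^*$. This algorithm $\varepsilon$-learns every such single-agent game using $\mathcal{O}(m\log(1/\varepsilon))$ rounds.
   Context: A principal $\varepsilon$-learns the game if it outputs $\tilde U:A\to\mathbb{R}$ such that there is a constant $W\in\mathbb{R}$ with $|U(a)+W-\tilde U(a)|\le\varepsilon$ for all $a\in A$. The principal initially knows only $A$ and that utilities lie in $[0,1]$. *)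

From HB Require Import structures.
From mathcomp Require Import all_boot all_order all_algebra.
From mathcomp Require Import all_classical all_reals all_analysis.
Set Implicit Arguments. Unset Strict Implicit. Unset Printing Implicit Defensive.
Import Order.TTheory GRing.Theory Num.Theory.
Local Open Scope ring_scope.

Section Learning.
Variables (R : realType) (A : finType).

Definition eps_learns (U Ut : A -> R) (eps : R) : Prop :=
  exists W : R, forall a : A, `|U a + W - Ut a| <= eps.

(* Agent behaviour: at round t, facing payment P, the agent plays br t P.
   br t P must be a best response (maximizer of U + P); ties arbitrary. *)
Definition best_responder (U : A -> R) (br : nat -> (A -> R) -> A) : Prop :=
  forall (t : nat) (P : A -> R) (b : A), U b + P b <= U (br t P) + P (br t P).

Definition pay_only (a : A) (p : R) : A -> R := fun b => if b == a then p else 0.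

(* Binary search for the smallest payment making the agent play a.
   Invariant: lo <= threshold <= hi. One round per query.
   Returns (final hi, next round index). *)
Fixpoint bsearch (br : nat -> (A -> R) -> A) (a : A) (t k : nat) (lo hi : R)
    : R * nat :=
  match k with
  | 0%N => (hi, t)
  | k'.+1 =>
      let p := (lo + hi) / 2 in
      if br t (pay_only a p) == a then bsearch br a t.+1 k' lo p
      else bsearch br a t.+1 k' p hi
  end.

Fixpoint learn_aux (br : nat -> (A -> R) -> A) (k : nat) (s : seq A) (t : nat)
    : (A -> R) * nat :=
  match s with
  | [::] => (fun _ => 0, t)
  | a :: s' =>
      let r1 := bsearch br a t k 0 1 in
      let r2 := learn_aux br k s' r1.2 in
      (fun b => if b == a then - r1.1 else r2.1 b, r2.2)
  end.

Definition n_iter (eps : R) : nat := (Num.truncn (ln (1 / eps) / ln 2)).+1.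

Definition learn_alg (br : nat -> (A -> R) -> A) (eps : R) : (A -> R) * nat :=
  learn_aux br (n_iter eps) (enum A) 0.

End Learning.

(** Paying [p] for action [a] alone makes a best-responding agent play [a]
    when [p] exceeds [P*(a) = max U - U a] and keeps it from playing [a] when
    [p] is below it, so the answers to these queries are monotone in [p] and a
    bisection of [[0, 1]] with [k] queries locates [P*(a)] up to [2^-k].
    Hence [-P* = U - max U] is learnt up to the constant shift [W = - max U],
    and [k = floor (log2 (1/eps)) + 1 <= 2 log2 (1/eps)] queries per action
    suffice. *)
From HB Require Import structures.
From mathcomp Require Import all_boot all_order all_algebra.
From mathcomp Require Import all_classical all_reals all_analysis.
From mathcomp Require Import lra ring.
Import Order.TTheory GRing.Theory Num.Theory.
Local Open Scope ring_scope.

Section BestResponseThreshold.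
Context {R : realType} {A : finType} {U : A -> R}.
Context {br : nat -> (A -> R) -> A} {m : A}.
Hypothesis br_best : best_responder U br.
Hypothesis U_max : forall b, U b <= U m.

Lemma best_response_pay_only_ge a t p :
  0 <= p -> br t (pay_only a p) = a -> U m - U a <= p.
Proof.
move=> p_ge0 br_a; have := br_best t (pay_only a p) m.
by rewrite br_a /pay_only eqxx; case: eqP => [->|_]; lra.
Qed.

Lemma best_response_pay_only_le a t p :
  br t (pay_only a p) != a -> p <= U m - U a.
Proof.
move=> br_na; have := br_best t (pay_only a p) a.
rewrite /pay_only eqxx (negbTE br_na); have := U_max (br t (pay_only a p)); lra.
Qed.

End BestResponseThreshold.

Section BinarySearch.
Context {R : realType} {A : finType} {br : nat -> (A -> R) -> A}.

Lemma bsearch_rounds a k t lo hi : (bsearch br a t k lo hi).2 = (t + k)%N.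
Proof.
elim: k t lo hi => [|k IHk] t lo hi /=; first by rewrite addn0.
by case: ifP => _; rewrite IHk addSnnS.
Qed.

Lemma learn_aux_rounds k s t : (learn_aux br k s t).2 = (t + k * size s)%N.
Proof.
elim: s t => [|a s IHs] t /=; first by rewrite muln0 addn0.
by rewrite IHs bsearch_rounds mulnS addnA.
Qed.

Context {S : A -> R}.
Hypothesis accepted_ge :
  forall a t (p : R), 0 <= p -> br t (pay_only a p) = a -> S a <= p.
Hypothesis rejected_le :
  forall a t (p : R), br t (pay_only a p) != a -> p <= S a.

Lemma bsearch_bounds a k t (lo hi : R) : 0 <= lo -> lo <= S a <= hi ->
  S a <= (bsearch br a t k lo hi).1 <= S a + (hi - lo) / 2 ^+ k.
Proof.
elim: k t lo hi => [|k IHk] t lo hi lo_ge0 /andP[lo_le le_hi] /=.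
  by rewrite expr0 divr1; lra.
have mid_ge0 : 0 <= (lo + hi) / 2 by apply: divr_ge0; lra.
have halve (d : R) : d / 2 / 2 ^+ k = d / 2 ^+ k.+1.
  by rewrite exprS invfM mulrA.
case: ifP => [/eqP accepted|/negbT rejected].
- have := IHk t.+1 lo ((lo + hi) / 2) lo_ge0.
  rewrite lo_le (accepted_ge _ _ _ mid_ge0 accepted) -halve => /(_ isT).
  by have -> : (lo + hi) / 2 - lo = (hi - lo) / 2 by field.
- have := IHk t.+1 ((lo + hi) / 2) hi mid_ge0.
  rewrite le_hi (rejected_le _ _ _ rejected) -halve => /(_ isT).
  by have -> : hi - (lo + hi) / 2 = (hi - lo) / 2 by field.
Qed.

Hypothesis S_unit : forall a, 0 <= S a <= 1.

Lemma learn_aux_bounds k s t b : b \in s ->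
  S b <= - (learn_aux br k s t).1 b <= S b + 1 / 2 ^+ k.
Proof.
elim: s t => [|a s IHs] t //=; rewrite in_cons.
case: eqP => [-> _|_ /= b_s]; last exact: IHs.
have := bsearch_bounds a k t 0 1 (lexx 0) (S_unit a).
by rewrite opprK subr0.
Qed.

End BinarySearch.

Lemma truncnS_le_double (F : archiRealDomainType) (x : F) :
  1 <= x -> (Num.truncn x).+1%:R <= 2 * x.
Proof.
move=> x_ge1; have : (Num.truncn x)%:R <= x by rewrite truncn_le; lra.
by rewrite -addn1 natrD; lra.
Qed.

Section IterationCount.
Context {R : realType} {eps : R}.
Hypothesis eps_gt0 : 0 < eps.

Let ln2_gt0 : 0 < ln (2 : R). Proof. by apply: ln_gt0; lra. Qed.

Lemma inv_exp2_n_iter_le : 1 / 2 ^+ n_iter eps <= eps.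
Proof.
have inv_eps_lt : 1 / eps < 2 ^+ n_iter eps.
  rewrite -ltr_ln ?posrE ?exprn_gt0 ?divr_gt0 // lnXn //.
  by rewrite -[ln 2 *+ _]mulr_natl -ltr_pdivrMr // /n_iter; exact: truncnS_gt.
rewrite ler_pdivrMr ?exprn_gt0 // -ler_pdivrMl // mulr1 -div1r.
exact: ltW.
Qed.

Lemma n_iter_le : eps <= 1 / 2 -> (n_iter eps)%:R <= 2 * (ln (1 / eps) / ln 2).
Proof.
move=> eps_le; apply: truncnS_le_double.
rewrite ler_pdivlMr // !mul1r ler_ln ?posrE ?invr_gt0 //.
by rewrite -div1r ler_pdivlMr // mulrC -ler_pdivlMr.
Qed.

End IterationCount.

Theorem theorem4p1 (R : realType) :
  exists C : R, 0 < C /\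
  forall (A : finType) (U : A -> R) (br : nat -> (A -> R) -> A) (eps : R),
    (2 <= #|A|)%N ->
    (forall a, 0 <= U a <= 1) ->
    best_responder U br ->
    0 < eps <= 1 / 2 ->
    eps_learns U (learn_alg br eps).1 eps /\
    ((learn_alg br eps).2)%:R <= C * #|A|%:R * ln (1 / eps).
Proof.
have ln2_gt0 : 0 < ln (2 : R) by apply: ln_gt0; lra.
exists (2 / ln 2); split; first exact: divr_gt0.
move=> A U br eps A_ge2 U_unit br_best /andP[eps_gt0 eps_le].
have [a0 _] : exists a0 : A, a0 \in A by apply/card_gt0P; apply: leq_trans A_ge2.
pose m := [arg max_(i > a0) U i]%O.
have U_max b : U b <= U m by rewrite /m; case: arg_maxP => // i _; apply.
have S_unit a : 0 <= U m - U a <= 1.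
  by have := U_max a; have := U_unit a; have := U_unit m; lra.
have bounds := learn_aux_bounds (best_response_pay_only_ge br_best)
  (best_response_pay_only_le br_best U_max) S_unit.
split.
- exists (- U m) => a; rewrite /learn_alg ler_norml.
  have := bounds (n_iter eps) (enum A) 0 a (mem_enum A a).
  have := inv_exp2_n_iter_le eps_gt0.
  move: (learn_aux _ _ _ _).1 (1 / _) => Ut err err_le /andP[lb ub].
  by apply/andP; split; lra.
- rewrite /learn_alg learn_aux_rounds add0n -cardE natrM.
  have -> : 2 / ln 2 * #|A|%:R * ln (1 / eps)
            = #|A|%:R * (2 * (ln (1 / eps) / ln 2)) by ring.
  by rewrite mulrC ler_wpM2l ?n_iter_le.
Qed.
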